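(* Let $A\in\mathbb{C}^{n\times n}$ be Hermitian positive semi-definite with eigenvalue decomposition $A=U\Lambda U^*$, $U$ unitary, $\Lambda=\mathrm{diag}(\lambda_1,\dots,\lambda_n)$, $\lambda_1\ge\cdots\ge\lambda_n$, and let $k$ satisfy $\lambda_k>\lambda_{k+1}>0$. Partition $U=(U_1,U_2)$ with $U_1\in\mathbb{C}^{n\times k}$ and let $\Lambda_2=\mathrm{diag}(\lambda_{k+1},\dots,\lambda_n)$. Let $q\ge1$, $k\le l\le n$, and let $\Omega\in\mathbb{C}^{n\times l}$ be any matrix such that $\widehat\Omega_1=U_1^*\Omega\in\mathbb{C}^{k\times l}$ has rank $k$ and $K_q=(A\Omega,A^2\Omega,\dots,A^q\Omega)$ has full column rank $ql$. Let $\widehat\Omega_2=U_2^*\Omega$, let $K_q=Q_qR_q$ be the thin QR factorization and $T=Q_q^*AQ_q$. Then $$0\le\mathrm{Tr}(A)-\mathrm{Tr}(T)\le\left(1+T_{q-1}^{-1}\!\left(\frac{2\lambda_k-\lambda_{k+1}}{\lambda_{k+1}}\right)\|\widehat\Omega_2\widehat\Omega_1^\dagger\|_2\right)\mathrm{Tr}(\Lambda_2).$$ Moreover, when $0<\|\widehat\Omega_2\widehat\Omega_1^\dagger\|_2\le\frac{\lambda_k}{\lambda_{k+1}}T_{q-1}\!\left(\frac{2\lambda_k-\lambda_{k+1}}{\lambda_{k+1}}\right)$, the following (tighter) bound holds: $$0\le\mathrm{Tr}(A)-\mathrm{Tr}(T)\le\left(1+\frac{\lambda_{k+1}}{\lam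bda_k}T_{q-1}^{-2}\!\left(\frac{2\lambda_k-\lambda_{k+1}}{\lambda_{k+1}}\right)\|\widehat\Omega_2\widehat\Omega_1^\dagger\|_2^2\right)\mathrm{Tr}(\Lambda_2).$$
   Context: $X^\dagger$ denotes the Moore–Penrose inverse and $\|\cdot\|_2$ the spectral norm. $T_m$ is the Chebyshev polynomial of the first kind of degree $m$; for $x\ge1$, $T_m(x)=\frac{(x+\sqrt{x^2-1})^m+(x-\sqrt{x^2-1})^m}{2}$; $T_m^{-1}(x)=1/T_m(x)$ and $T_m^{-2}(x)=1/T_m(x)^2$. *)

From HB Require Import structures.
From mathcomp Require Import all_boot all_order all_algebra.
From mathcomp Require Import complex.
From mathcomp Require Import boolp classical_sets reals.
Set Implicit Arguments. Unset Strict Implicit. Unset Printing Implicit Defensive.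
Import Order.TTheory GRing.Theory Num.Theory.
Local Open Scope ring_scope.

Definition ctrmx (R : realType) (m n : nat) (X : 'M[R[i]]_(m, n)) : 'M[R[i]]_(n, m) :=
  (map_mx Num.conj X)^T.

Definition vnorm2 (R : realType) (n : nat) (v : 'cV[R[i]]_n) : R :=
  Num.sqrt (complex.Re (\sum_(i < n) `|v i 0| ^+ 2)).

Definition specnorm (R : realType) (m n : nat) (X : 'M[R[i]]_(m, n)) : R :=
  sup [set vnorm2 (X *m v) | v in [set v : 'cV[R[i]]_n | vnorm2 v = 1]].

Definition penrose (R : realType) (m n : nat) (X : 'M[R[i]]_(m, n)) (Y : 'M[R[i]]_(n, m)) :=
  [/\ X *m Y *m X = X, Y *m X *m Y = Y,
      ctrmx (X *m Y) = X *m Y & ctrmx (Y *m X) = Y *m X].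

Definition pinv (R : realType) (m n : nat) (X : 'M[R[i]]_(m, n)) : 'M[R[i]]_(n, m) :=
  xget 0 [set Y | penrose X Y].

Fixpoint cheb (R : realType) (m : nat) (x : R) : R :=
  match m with
  | 0 => 1
  | 1 => x
  | (p.+1 as p1).+1 => 2 * x * cheb p1 x - cheb p x
  end.

Definition upper_trig (R : realType) (m n : nat) (X : 'M[R[i]]_(m, n)) :=
  forall (i : 'I_m) (j : 'I_n), (j < i)%N -> X i j = 0.

Definition hermitian_psd (R : realType) (n : nat) (A : 'M[R[i]]_n) :=
  ctrmx A = A /\ forall v : 'cV[R[i]]_n, 0 <= (ctrmx v *m A *m v) 0 0.

(* diagonal matrix diag(lam 1, ..., lam n) with 1-based indexing of lam *)
Definition rdiag (R : realType) (n : nat) (lam : nat -> R) : 'M[R[i]]_n :=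
  \matrix_(i < n, j < n) ((i == j)%:R * real_complex R (lam i.+1)).

Definition krylov (R : realType) (n l q : nat) (A : 'M[R[i]]_n) (Om : 'M[R[i]]_(n, l))
  : 'M[R[i]]_(n, \sum_(j < q) l) :=
  \mxrow_(j < q) (A ^+ j.+1 *m Om).

(* Put Qt := U^* Q and V := I - Qt Qt^*, the orthogonal projector onto the
   complement of the range of U^* K_q.  Then Tr A - Tr T = sum_a lambda_a V_aa
   with 0 <= V_aa <= 1, so the last m indices contribute at most Tr Lambda_2.
   For the first k, let p(x) := T_{q-1}(2x/lambda_{k+1} - 1).  As x p(x) has
   degree q and no constant term, A p(A) Omega lies in the range of K_q = Q R_q,
   hence V kills U^* A p(A) Omega = Lambda p(Lambda) (Omega1; Omega2).  Right
   multiplication by pinv Omega1 expresses column i <= k of V through the last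
   m columns, weighted by lambda_j p(lambda_j) (Omega2 pinv Omega1)_ji divided
   by lambda_i p(lambda_i).  On the head p(lambda_i) >= T_{q-1}((2 lambda_k -
   lambda_{k+1}) / lambda_{k+1}), on the tail |lambda_j p(lambda_j)| <= lambda_j;
   Cauchy-Schwarz against the columns of V gives the first bound, and the
   contraction |V z| <= |z| the second, which thus needs no side condition. *)

From HB Require Import structures.
From mathcomp Require Import all_boot all_order all_algebra.
From mathcomp Require Import complex.
From mathcomp Require Import boolp classical_sets reals.
From mathcomp Require Import ring lra.
Import Order.TTheory GRing.Theory Num.Theory.
Local Open Scope ring_scope.
Set Implicit Arguments. Unset Strict Implicit. Unset Printing Implicit Defensive.
Local Notation "x %:C" := (real_complex _ x) : ring_scope.

Section ConjugateTranspose.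
Variable R : realType.
Local Notation C := R[i].

Lemma ctrmxE m n (X : 'M[C]_(m, n)) i j : ctrmx X i j = (X j i)^*.
Proof. by rewrite /ctrmx !mxE. Qed.

Lemma ctrmxK m n (X : 'M[C]_(m, n)) : ctrmx (ctrmx X) = X.
Proof. by apply/matrixP=> i j; rewrite !ctrmxE conjCK. Qed.

Lemma ctrmx_mul m n p (X : 'M[C]_(m, n)) (Y : 'M[C]_(n, p)) :
  ctrmx (X *m Y) = ctrmx Y *m ctrmx X.
Proof. by rewrite /ctrmx map_mxM trmx_mul. Qed.

Lemma ctrmxB m n (X Y : 'M[C]_(m, n)) : ctrmx (X - Y) = ctrmx X - ctrmx Y.
Proof. by apply/matrixP=> i j; rewrite !(ctrmxE, mxE) rmorphB. Qed.

Lemma ctrmx1 n : ctrmx (1%:M : 'M[C]_n) = 1%:M.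
Proof. by apply/matrixP=> i j; rewrite ctrmxE !mxE eq_sym conjC_nat. Qed.

Lemma ctrmx0 m n : ctrmx (0 : 'M[C]_(m, n)) = 0.
Proof. by apply/matrixP=> i j; rewrite ctrmxE !mxE conjC0. Qed.

Lemma ctrmx_inv n (X : 'M[C]_n) : ctrmx (invmx X) = invmx (ctrmx X).
Proof. by rewrite /ctrmx map_invmx trmx_inv. Qed.

Lemma ctrmx_row_mx m n1 n2 (X : 'M[C]_(m, n1)) (Y : 'M[C]_(m, n2)) :
  ctrmx (row_mx X Y) = col_mx (ctrmx X) (ctrmx Y).
Proof. by rewrite /ctrmx map_row_mx tr_row_mx. Qed.

End ConjugateTranspose.

Section SquaredNorm.
Variable R : realType.
Local Notation C := R[i].

Definition sqnorm n (z : 'cV[C]_n) : C := \sum_a `|z a 0| ^+ 2.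

Lemma sqnormE n (z : 'cV[C]_n) : (ctrmx z *m z) 0 0 = sqnorm z.
Proof. by rewrite mxE; apply: eq_bigr => a _; rewrite ctrmxE normCK mulrC. Qed.

Lemma sqnorm_ge0 n (z : 'cV[C]_n) : 0 <= sqnorm z.
Proof. by apply: sumr_ge0 => a _; rewrite exprn_ge0. Qed.

Lemma sqnorm_eq0 n (z : 'cV[C]_n) : sqnorm z = 0 -> z = 0.
Proof.
move/eqP; rewrite psumr_eq0 => [/allP z0|a _]; last exact: exprn_ge0.
apply/matrixP=> a b; rewrite ord1 mxE.
by apply/eqP; rewrite -normr_eq0 -sqrf_eq0; apply: z0; rewrite mem_index_enum.
Qed.

Lemma sqnorm_delta n (i : 'I_n) : sqnorm (delta_mx i 0) = 1.
Proof.
rewrite /sqnorm (bigD1 i) //= big1 => [|a /negbTE ai]; rewrite mxE ?ai ?eqxx /=.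
  by rewrite normr1 expr1n addr0.
by rewrite normr0 expr0n.
Qed.

Lemma sqnorm_entry_le n (z : 'cV[C]_n) i : `|z i 0| ^+ 2 <= sqnorm z.
Proof.
by rewrite /sqnorm (bigD1 i) //= lerDl; apply: sumr_ge0 => a _; apply: exprn_ge0.
Qed.

End SquaredNorm.

Section OrthogonalProjector.
Variable R : realType.
Local Notation C := R[i].

Definition orthoproj n (V : 'M[C]_n) := ctrmx V = V /\ V *m V = V.

Lemma orthoprojC n (V : 'M[C]_n) : orthoproj V -> orthoproj (1%:M - V).
Proof.
move=> [VV VVV]; split; first by rewrite ctrmxB ctrmx1 VV.
by rewrite mulmxBl mul1mx mulmxBr mulmx1 VVV subrr subr0.
Qed.

Lemma orthoproj_range n r (Q : 'M[C]_(n, r)) :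
  ctrmx Q *m Q = 1%:M -> orthoproj (Q *m ctrmx Q).
Proof.
move=> QQ; split; first by rewrite ctrmx_mul ctrmxK.
by rewrite mulmxA -(mulmxA Q) QQ mulmx1.
Qed.

Lemma compl_range_mulmx n r (Q : 'M[C]_(n, r)) :
  ctrmx Q *m Q = 1%:M -> (1%:M - Q *m ctrmx Q) *m Q = 0.
Proof. by move=> QQ; rewrite mulmxBl mul1mx -mulmxA QQ mulmx1 subrr. Qed.

Lemma orthoproj_sqnorm n (V : 'M[C]_n) (z : 'cV[C]_n) :
  orthoproj V -> sqnorm (V *m z) = (ctrmx z *m V *m z) 0 0.
Proof.
by move=> [VV VVV]; rewrite -sqnormE ctrmx_mul VV -mulmxA (mulmxA V) VVV mulmxA.
Qed.

Lemma orthoproj_sqnorm_le n (V : 'M[C]_n) (z : 'cV[C]_n) :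
  orthoproj V -> sqnorm (V *m z) <= sqnorm z.
Proof.
move=> hV; have := sqnorm_ge0 ((1%:M - V) *m z).
rewrite (orthoproj_sqnorm _ (orthoprojC hV)) (orthoproj_sqnorm _ hV).
rewrite mulmxBr mulmx1 mulmxBl -sqnormE [X in 0 <= X -> _]mxE [X in _ + X]mxE.
by rewrite subr_ge0.
Qed.

Lemma orthoproj_diag n (V : 'M[C]_n) i :
  orthoproj V -> V i i = \sum_a `|V a i| ^+ 2.
Proof.
move=> [VV VVV]; rewrite -{1}VVV -{1}VV mxE; apply: eq_bigr => a _.
by rewrite ctrmxE normCK mulrC.
Qed.

Lemma orthoproj_diag_ge0 n (V : 'M[C]_n) i : orthoproj V -> 0 <= V i i.
Proof. by move=> hV; rewrite orthoproj_diag //; apply: sumr_ge0 => a _; apply: exprn_ge0. Qed.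

Lemma orthoproj_diag_le1 n (V : 'M[C]_n) i : orthoproj V -> V i i <= 1.
Proof.
move=> hV; have := orthoproj_sqnorm_le (delta_mx i 0) hV.
rewrite sqnorm_delta -colE orthoproj_diag //.
by under [X in X <= 1 -> _]eq_bigr do rewrite mxE.
Qed.

Lemma orthoproj_lcol_le1 k m (V : 'M[C]_(k + m)) b :
  orthoproj V -> \sum_(i < k) `|V (lshift m i) b| ^+ 2 <= 1.
Proof.
move=> hV; apply: le_trans (orthoproj_diag_le1 b hV).
rewrite orthoproj_diag // big_split_ord /= lerDl.
by apply: sumr_ge0 => a _; apply: exprn_ge0.
Qed.

End OrthogonalProjector.

Lemma cauchy_schwarz_le (F : numFieldType) (I : finType) (x y : I -> F) (a b : F) :
  (forall i, 0 <= x i) -> (forall i, 0 <= y i) -> 0 <= a -> 0 <= b ->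
  \sum_i x i ^+ 2 <= a ^+ 2 -> \sum_i y i ^+ 2 <= b ^+ 2 ->
  \sum_i x i * y i <= a * b.
Proof.
move=> x0 y0 a0 b0 hX hY.
have sum_mul_eq0 (z w : I -> F) :
    (forall i, 0 <= z i) -> \sum_i z i ^+ 2 <= 0 -> \sum_i z i * w i = 0.
  move=> z0 hz; apply: big1 => i _.
  have zi : z i ^+ 2 <= 0.
    apply: le_trans hz; rewrite (bigD1 i) //= lerDl.
    by apply: sumr_ge0 => j _; apply: exprn_ge0.
  have : z i ^+ 2 == 0 by rewrite eq_le zi exprn_ge0.
  by rewrite sqrf_eq0 => /eqP ->; rewrite mul0r.
have [a_eq0|an0] := eqVneq a 0.
  by rewrite a_eq0 mul0r sum_mul_eq0 //; move: hX; rewrite a_eq0 expr2 mul0r.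
have [b_eq0|bn0] := eqVneq b 0.
  rewrite b_eq0 mulr0 (eq_bigr _ (fun i _ => mulrC _ _)) sum_mul_eq0 //.
  by move: hY; rewrite b_eq0 expr2 mul0r.
have a_gt0 : 0 < a by rewrite lt_def an0.
have b_gt0 : 0 < b by rewrite lt_def bn0.
(* AM-GM termwise: 2 a b x y <= b^2 x^2 + a^2 y^2 *)
have amgm i : x i * y i * (a * b) *+ 2 <= b ^+ 2 * x i ^+ 2 + a ^+ 2 * y i ^+ 2.
  have := Order.le_of_leif (real_leif_mean_square_scaled
    (ger0_real (mulr_ge0 b0 (x0 i))) (ger0_real (mulr_ge0 a0 (y0 i)))).
  by rewrite !exprMn; congr (_ <= _); ring.
have : \sum_i x i * y i * (a * b) *+ 2 <=
       \sum_i (b ^+ 2 * x i ^+ 2 + a ^+ 2 * y i ^+ 2).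
  by apply: ler_sum => i _; apply: amgm.
rewrite sumrMnl -mulr_suml big_split /= -!mulr_sumr => sum_amgm.
have sum_le : b ^+ 2 * \sum_i x i ^+ 2 + a ^+ 2 * \sum_i y i ^+ 2 <= (a * b) * (a * b) *+ 2.
  have -> : (a * b) * (a * b) *+ 2 = b ^+ 2 * a ^+ 2 + a ^+ 2 * b ^+ 2 by ring.
  by apply: lerD; apply: ler_wpM2l => //; rewrite exprn_ge0.
by have := le_trans sum_amgm sum_le; rewrite ler_pMn2r // ler_pM2r ?mulr_gt0.
Qed.

Section PseudoInverse.
Variable R : realType.
Local Notation C := R[i].

Lemma row_free_gram_unit m n (X : 'M[C]_(m, n)) :
  row_free X -> X *m ctrmx X \in unitmx.
Proof.
move=> hX; rewrite -row_free_unit; apply: inj_row_free => v hv.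
have vX0 : ctrmx (v *m X) = 0.
  apply: sqnorm_eq0; rewrite -sqnormE ctrmxK ctrmx_mul mulmxA -(mulmxA v) hv.
  by rewrite mul0mx mxE.
by apply: (row_free_inj hX); rewrite -(ctrmxK (v *m X)) vX0 ctrmx0 mul0mx.
Qed.

Lemma mulmx_pinv m n (X : 'M[C]_(m, n)) : \rank X = m -> X *m pinv X = 1%:M.
Proof.
move=> rX; have hX : row_free X by rewrite /row_free rX.
have G_unit := row_free_gram_unit hX.
have GG : ctrmx (X *m ctrmx X) = X *m ctrmx X by rewrite ctrmx_mul ctrmxK.
have [XYX _ _ _] : penrose X (pinv X).
  apply: (xgetPex 0); exists (ctrmx X *m invmx (X *m ctrmx X)); split.
  - by rewrite (mulmxA X) mulmxV // mul1mx.
  - by rewrite -mulmxA (mulmxA X) mulmxV // mulmx1.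
  - by rewrite mulmxA mulmxV // ctrmx1.
  - by rewrite !ctrmx_mul ctrmx_inv GG ctrmxK mulmxA.
by apply: (row_free_inj hX); rewrite mul1mx.
Qed.

End PseudoInverse.

Section SpectralNorm.
Variable R : realType.
Local Notation C := R[i].

Lemma ler_Re (x y : C) : x <= y -> complex.Re x <= complex.Re y.
Proof. by rewrite lecE => /andP[]. Qed.

Lemma ge0_RRe (x : C) : 0 <= x -> x = (complex.Re x)%:C.
Proof. by move=> x0; rewrite RRe_real // ger0_real. Qed.

Lemma vnorm2_eq1 n (v : 'cV[C]_n) : (vnorm2 v = 1) <-> (sqnorm v = 1).
Proof.
rewrite /vnorm2 -/(sqnorm v); split=> [v1|->]; last by rewrite sqrtr1.
have Re0 : 0 <= complex.Re (sqnorm v) by apply: (ler_Re (sqnorm_ge0 v)).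
by rewrite (ge0_RRe (sqnorm_ge0 v)) -(sqr_sqrtr Re0) v1 expr1n.
Qed.

Lemma vnorm2_ge n (v : 'cV[C]_n) (r : R) :
  0 <= r -> r%:C ^+ 2 <= sqnorm v -> r <= vnorm2 v.
Proof.
move=> r0 rv; rewrite -(ger0_norm r0) -sqrtr_sqr ler_sqrt; last exact: ler_Re (sqnorm_ge0 v).
by have := ler_Re rv; rewrite -rmorphXn.
Qed.

Lemma specnorm_ubound m n (S : 'M[C]_(m, n)) :
  has_ubound [set vnorm2 (S *m v) | v in [set v : 'cV[C]_n | vnorm2 v = 1]].
Proof.
set B := \sum_a (\sum_i `|S a i|) ^+ 2.
have B0 : 0 <= B by apply: sumr_ge0 => a _; apply/exprn_ge0/sumr_ge0.
exists (Num.sqrt (complex.Re B)) => _ [v /vnorm2_eq1 v1 <-].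
rewrite /vnorm2 ler_sqrt; last exact: ler_Re B0.
apply/ler_Re/ler_sum => a _; rewrite ler_pXn2r ?nnegrE ?sumr_ge0 // mxE.
apply: le_trans (ler_norm_sum _ _ _) _; apply: ler_sum => i _.
rewrite normrM ler_piMr // -(@ler_pXn2r _ 2) ?nnegrE // expr1n -v1.
exact: sqnorm_entry_le.
Qed.

Lemma specnorm_ge m n (S : 'M[C]_(m, n)) v :
  vnorm2 v = 1 -> vnorm2 (S *m v) <= specnorm S.
Proof. by move=> v1; apply: (ub_le_sup (specnorm_ubound S)); exists v. Qed.

Lemma specnorm_ge0 m n (S : 'M[C]_(m, n)) : (0 < n)%N -> 0 <= specnorm S.
Proof.
move=> n0; have e1 : vnorm2 (delta_mx (Ordinal n0) 0 : 'cV[C]_n) = 1.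
  by apply/vnorm2_eq1/sqnorm_delta.
exact: le_trans (sqrtr_ge0 _) (specnorm_ge S e1).
Qed.

(* Test against the unit vector parallel to the conjugate of row j. *)
Lemma specnorm_row m n (S : 'M[C]_(m, n)) j :
  \sum_i `|S j i| ^+ 2 <= (specnorm S ^+ 2)%:C.
Proof.
set r := \sum_i _.
have r0 : 0 <= r by apply: sumr_ge0 => i _; apply: exprn_ge0.
have [->|rn0] := eqVneq r 0; first by rewrite ler0c sqr_ge0.
set rho := Num.sqrt (complex.Re r).
have rho0 : 0 <= rho by apply: sqrtr_ge0.
have rhoC0 : 0 <= rho%:C by rewrite ler0c.
have Re0 : 0 <= complex.Re r := ler_Re r0.
have rE : r = rho%:C ^+ 2 by rewrite -rmorphXn sqr_sqrtr //; exact: ge0_RRe.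
have rhon0 : rho%:C != 0 by apply: contraNneq rn0; rewrite rE => ->; rewrite expr0n.
set v := \col_i ((S j i)^* / rho%:C).
have v1 : sqnorm v = 1.
  rewrite /sqnorm.
  under eq_bigr do rewrite mxE normrM normfV norm_conjC (ger0_norm rhoC0) exprMn.
  by rewrite -mulr_suml -/r rE exprVn mulfV // expf_neq0.
have Svj : (S *m v) j 0 = rho%:C.
  rewrite mxE; under eq_bigr do rewrite mxE mulrA -normCK.
  by rewrite -mulr_suml -/r rE expr2 mulfK.
have rho_le : rho <= specnorm S.
  have e1 : vnorm2 v = 1 by apply/vnorm2_eq1.
  apply: le_trans (specnorm_ge S e1).
  apply: vnorm2_ge => //; apply: le_trans (sqnorm_entry_le _ j).
  by rewrite Svj ger0_norm.
by rewrite rE -rmorphXn lecR ler_pXn2r // ?nnegrE // (le_trans rho0).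
Qed.

End SpectralNorm.

Section Chebyshev.
Variable R : realType.
Implicit Types x y mu lk : R.

Lemma chebSS n x : cheb n.+2 x = 2 * x * cheb n.+1 x - cheb n x.
Proof. by []. Qed.

Lemma cheb_pell n x :
  (cheb n x - x * cheb n.+1 x) ^+ 2 = (1 - x ^+ 2) * (1 - cheb n.+1 x ^+ 2).
Proof.
elim: n => [|n IH]; first by rewrite /=; ring.
rewrite chebSS; set a := cheb n x; set b := cheb n.+1 x.
apply/eqP; rewrite -subr_eq0; apply/eqP.
by transitivity ((a - x * b) ^+ 2 - (1 - x ^+ 2) * (1 - b ^+ 2)); [ring | rewrite IH subrr].
Qed.

Lemma cheb_sqr_le1 n x : -1 <= x <= 1 -> cheb n x ^+ 2 <= 1.
Proof.
move=> /andP[x_ge x_le]; have [x2_lt|x2_ge] := ltP (x ^+ 2) 1.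
  case: n => [|n]; first by rewrite expr1n.
  have := sqr_ge0 (cheb n x - x * cheb n.+1 x).
  by rewrite cheb_pell pmulr_rge0 ?subr_gt0 // subr_ge0.
have x2 : x ^+ 2 = 1 by apply/eqP; rewrite eq_le x2_ge andbT expr2; nra.
suff -> : cheb n x ^+ 2 = 1 by [].
elim: n => [|n IH]; first by rewrite expr1n.
have := cheb_pell n x; rewrite x2 subrr mul0r => /eqP.
rewrite sqrf_eq0 subr_eq0 => /eqP cheb_n.
by rewrite -IH cheb_n exprMn x2 mul1r.
Qed.

(* On [1, +oo) the sequence and its increments are nonnegative and
   nondecreasing in x, which is carried through the induction. *)
Lemma cheb_ge1_homo n x y : 1 <= y -> y <= x -> 1 <= cheb n y <= cheb n x.
Proof.
move=> y1 yx.
suff [] : [/\ 1 <= cheb n y, cheb n y <= cheb n x,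
            0 <= cheb n.+1 y - cheb n y
          & cheb n.+1 y - cheb n y <= cheb n.+1 x - cheb n x] by move=> -> ->.
elim: n => [|n [IH1 IH2 IH3 IH4]]; first by split=> /=; lra.
split; [lra|lra| |].
- rewrite chebSS; have : 0 <= (2 * y - 2) * cheb n.+1 y by apply: mulr_ge0; lra.
  lra.
- rewrite !chebSS; have : (2 * y - 2) * cheb n.+1 y <= (2 * x - 2) * cheb n.+1 x.
    by apply: ler_pM; lra.
  lra.
Qed.

Lemma cheb_shift_ge n mu lk x : 0 < mu <= lk -> lk <= x ->
  1 <= cheb n ((2 * lk - mu) / mu) <= cheb n (2 / mu * x - 1).
Proof.
move=> /andP[mu0 mulk] lkx.
have -> : (2 * lk - mu) / mu = 2 / mu * lk - 1 by field; rewrite gt_eqF.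
apply: cheb_ge1_homo; last by rewrite lerD2r ler_wpM2l // divr_ge0 // ltW.
have : 1 <= lk / mu by rewrite ler_pdivlMr // mul1r.
have -> : 2 / mu * lk = 2 * (lk / mu) by rewrite mulrAC -mulrA.
lra.
Qed.

Lemma norm_mul_cheb_shift_le n mu x : 0 < mu -> 0 <= x <= mu ->
  `|x * cheb n (2 / mu * x - 1)| <= x.
Proof.
move=> mu0 /andP[x0 xmu]; rewrite normrM (ger0_norm x0) ler_piMr //.
rewrite -(@ler_pXn2r _ 2) ?nnegrE // expr1n -normrX ger0_norm ?sqr_ge0 //.
apply: cheb_sqr_le1.
have ax_ge0 : 0 <= 2 / mu * x by rewrite mulr_ge0 // divr_ge0 // ltW.
have ax_le2 : 2 / mu * x <= 2 by rewrite mulrAC ler_pdivrMr // ler_pM2l.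
by apply/andP; split; lra.
Qed.

Fixpoint chebp (n : nat) : {poly R} :=
  match n with
  | 0 => 1
  | 1 => 'X
  | (p.+1 as p1).+1 => 'X * chebp p1 *+ 2 - chebp p
  end.

Lemma horner_chebp n x : (chebp n).[x] = cheb n x.
Proof.
suff [] : (chebp n).[x] = cheb n x /\ (chebp n.+1).[x] = cheb n.+1 x by [].
elim: n => [|n [IH1 IH2]]; first by rewrite /= hornerC hornerX.
split=> //=; rewrite -/(chebp n.+1) -/(cheb n.+1 x) hornerD hornerN hornerMn hornerM hornerX.
by rewrite IH1 IH2 -mulr_natl mulrA.
Qed.

Lemma size_chebp n : (size (chebp n) <= n.+1)%N.
Proof.
suff [] : (size (chebp n) <= n.+1)%N /\ (size (chebp n.+1) <= n.+2)%N by [].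
elim: n => [|n [IH1 IH2]]; first by rewrite /= size_poly1 size_polyX.
split=> //=; rewrite -/(chebp n.+1).
apply: leq_trans (size_polyD _ _) _; rewrite size_polyN geq_max.
rewrite (leq_trans IH1 (leqW (leqnSn _))) andbT.
rewrite mulr2n; apply: leq_trans (size_polyD _ _) _; rewrite maxnn.
by apply: leq_trans (size_polyMleq _ _) _; rewrite size_polyX add2n ltnS.
Qed.

Definition shifted_chebp mu n : {poly R} := chebp n \Po ((2 / mu) *: 'X + (-1)%:P).

Lemma horner_shifted_chebp mu n x : (shifted_chebp mu n).[x] = cheb n (2 / mu * x - 1).
Proof. by rewrite horner_comp horner_chebp !hornerE. Qed.

Lemma size_shifted_chebp mu n : (size (shifted_chebp mu n) <= n.+1)%N.
Proof.
apply: leq_trans (size_comp_poly_leq _ _) _; rewrite ltnS -[X in (_ <= X)%N]muln1.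
apply: leq_mul; rewrite -subn1 leq_subLR ?add1n ?size_chebp //.
apply: leq_trans (size_polyD _ _) _; rewrite geq_max size_polyC (leq_trans (leq_b1 _)) // andbT.
by apply: leq_trans (size_scale_leq _ _) _; rewrite size_polyX.
Qed.

End Chebyshev.

Arguments chebp {R} n.

Section RealDiagonal.
Variable R : realType.
Local Notation C := R[i].

Lemma rdiag_mulmxE n p (f : nat -> R) (X : 'M[C]_(n, p)) a b :
  (rdiag n f *m X) a b = (f a.+1)%:C * X a b.
Proof.
rewrite mxE (bigD1 a) //= big1 ?addr0 => [|a' /negbTE aa']; rewrite mxE ?eqxx ?mul1r //.
by rewrite eq_sym aa' !mul0r.
Qed.

Lemma rdiag_mul n (f g : nat -> R) :
  rdiag n f *m rdiag n g = rdiag n (fun a => f a * g a).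
Proof.
apply/matrixP=> a b; rewrite rdiag_mulmxE !mxE rmorphM /=.
by rewrite mulrCA.
Qed.

Lemma mxtrace_rdiag_mul n (f : nat -> R) (X : 'M[C]_n) :
  \tr (rdiag n f *m X) = \sum_(a < n) (f a.+1)%:C * X a a.
Proof. by apply: eq_bigr => a _; rewrite rdiag_mulmxE. Qed.

End RealDiagonal.

Section SpectralDecomposition.
Variables (R : realType) (n : nat) (A U : 'M[R[i]]_n) (lam : nat -> R).
Hypothesis U_unitary : ctrmx U *m U = 1%:M.
Hypothesis A_spectral : A = U *m rdiag n lam *m ctrmx U.

Lemma ctrmx_unitary_mulmx : ctrmx U *m A = rdiag n lam *m ctrmx U.
Proof. by rewrite A_spectral !mulmxA U_unitary mul1mx. Qed.

Lemma ctrmx_unitary_mulmx_exp j p (X : 'M[R[i]]_(n, p)) :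
  ctrmx U *m (A ^+ j *m X) = rdiag n (fun a => lam a ^+ j) *m (ctrmx U *m X).
Proof.
elim: j => [|j IH].
  by apply/matrixP=> a b; rewrite expr0 mul1mx rdiag_mulmxE expr0 rmorph1 mul1r.
rewrite exprS -mulmxE -mulmxA mulmxA ctrmx_unitary_mulmx -mulmxA IH mulmxA rdiag_mul.
by congr (rdiag _ _ *m _); apply/funext => a; rewrite exprS.
Qed.

Lemma psd_eigen_ge0 : hermitian_psd A -> forall a : 'I_n, 0 <= lam a.+1.
Proof.
move=> [_ A_psd] a; have := A_psd (U *m delta_mx a 0).
rewrite ctrmx_mul -(mulmxA _ (ctrmx U) A) ctrmx_unitary_mulmx !mulmxA.
rewrite -(mulmxA _ (ctrmx U) U) U_unitary mulmx1 -mulmxA mxE (bigD1 a) //=.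
rewrite big1 => [|b /negbTE ba]; last by rewrite ctrmxE mxE ba conjC0 mul0r.
by rewrite addr0 ctrmxE mxE eqxx conjC1 mul1r rdiag_mulmxE mxE eqxx mulr1 ler0c.
Qed.

Lemma trace_compression_gap r (Q : 'M[R[i]]_(n, r)) :
  let Qt := ctrmx U *m Q in
  \tr A - \tr (ctrmx Q *m A *m Q) =
  \sum_(a < n) (lam a.+1)%:C * (1%:M - Qt *m ctrmx Qt) a a.
Proof.
move=> Qt; rewrite -mxtrace_rdiag_mul mulmxBr mulmx1 linearB /=.
have -> : \tr A = \tr (rdiag n lam) by rewrite A_spectral mxtrace_mulC mulmxA U_unitary mul1mx.
congr (_ - _); rewrite /Qt ctrmx_mul ctrmxK A_spectral -!mulmxA mxtrace_mulC !mulmxA.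
by rewrite -!mulmxA mxtrace_mulC !mulmxA.
Qed.

Lemma krylov_poly_mulmx l q (Om : 'M[R[i]]_(n, l)) (P : {poly R}) :
  (size P <= q)%N ->
  ctrmx U *m (krylov q A Om *m \mxcol_(j < q) ((P`_j)%:C *: (1%:M : 'M_l))) =
  rdiag n (fun a => lam a * P.[lam a]) *m (ctrmx U *m Om).
Proof.
move=> sizeP; apply/matrixP=> a b.
rewrite /krylov mul_mxrow_mxcol mulmx_sumr summxE rdiag_mulmxE.
rewrite (horner_coef_wide _ sizeP) mulr_sumr rmorph_sum mulr_suml; apply: eq_bigr => j _.
rewrite -scalemxAr mulmx1 -scalemxAr mxE ctrmx_unitary_mulmx_exp rdiag_mulmxE.
by rewrite !rmorphM !rmorphXn /= exprS; ring.
Qed.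

Lemma unitary_mul_orthonormal r (Q : 'M[R[i]]_(n, r)) :
  ctrmx Q *m Q = 1%:M -> ctrmx (ctrmx U *m Q) *m (ctrmx U *m Q) = 1%:M.
Proof.
by move=> Q_orth; rewrite ctrmx_mul ctrmxK -mulmxA (mulmxA U) (mulmx1C U_unitary) mul1mx.
Qed.

Lemma krylov_compl_range_mulmx l q (Om : 'M[R[i]]_(n, l))
    (Q : 'M[R[i]]_(n, \sum_(j < q) l)) (Rq : 'M_(\sum_(j < q) l)) (P : {poly R}) :
  krylov q A Om = Q *m Rq -> ctrmx Q *m Q = 1%:M -> (size P <= q)%N ->
  let Qt := ctrmx U *m Q in
  (1%:M - Qt *m ctrmx Qt) *m (rdiag n (fun a => lam a * P.[lam a]) *m (ctrmx U *m Om)) = 0.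
Proof.
move=> Kq_QR Q_orth sizeP Qt; rewrite -(krylov_poly_mulmx _ sizeP) Kq_QR !mulmxA.
by rewrite -(mulmxA _ (ctrmx U) Q) compl_range_mulmx ?unitary_mul_orthonormal // !mul0mx.
Qed.

End SpectralDecomposition.

Lemma normr_real_complex (R : realType) (x : R) : `|x%:C| = `|x|%:C.
Proof.
have [x0|x0] := leP 0 x; first by rewrite !ger0_norm ?ler0c.
by rewrite !ltr0_norm ?ltcR // rmorphN.
Qed.

Section TraceGapBounds.
Variables (R : realType) (k m : nat) (V : 'M[R[i]]_(k + m)) (S : 'M[R[i]]_(m, k)).
Variables (lam p : nat -> R) (c s : R).
Local Notation lamL i := (lam (lshift m i).+1).
Local Notation lamR j := (lam (rshift k j).+1).
Local Notation pL i := (p (lshift m i).+1).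
Local Notation dR j := (lam (rshift k j).+1 * p (rshift k j).+1).

Hypothesis V_proj : orthoproj V.
Hypothesis V_annihilates :
  V *m (rdiag (k + m) (fun a => lam a * p a) *m col_mx 1%:M S) = 0.
Hypothesis lamL_gt0 : forall i : 'I_k, 0 < lamL i.
Hypothesis c_gt0 : 0 < c.
Hypothesis pL_ge : forall i : 'I_k, c <= pL i.
Hypothesis lamR_ge0 : forall j : 'I_m, 0 <= lamR j.
Hypothesis dR_le : forall j : 'I_m, `|dR j| <= lamR j.
Hypothesis S_row : forall j : 'I_m, \sum_i `|S j i| ^+ 2 <= (s ^+ 2)%:C.

Lemma pL_gt0 (i : 'I_k) : 0 < pL i.
Proof. exact: lt_le_trans c_gt0 (pL_ge i). Qed.

Lemma lcol_eq_rcols (i : 'I_k) a :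
  V a (lshift m i) * (lamL i * pL i)%:C =
  - \sum_j V a (rshift k j) * ((dR j)%:C * S j i).
Proof.
apply/eqP; rewrite -addr_eq0; apply/eqP.
transitivity ((V *m (rdiag (k + m) (fun a => lam a * p a) *m col_mx 1%:M S)) a i);
  last by rewrite V_annihilates mxE.
rewrite mxE big_split_ord /=.
congr (_ + _); last by apply: eq_bigr => j _; rewrite rdiag_mulmxE col_mxEd.
rewrite (bigD1 i) //= big1 ?addr0 => [|i' /negbTE i'i].
  by rewrite rdiag_mulmxE col_mxEu mxE eqxx mulr1.
by rewrite rdiag_mulmxE col_mxEu mxE i'i /= !mulr0.
Qed.

Lemma head_gap_ge0 : 0 <= \sum_(i < k) (lamL i)%:C * V (lshift m i) (lshift m i).
Proof.
apply: sumr_ge0 => i _.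
by apply: mulr_ge0; [rewrite ler0c ltW | exact: orthoproj_diag_ge0].
Qed.

Lemma head_gap_le : 0 <= s ->
  \sum_(i < k) (lamL i)%:C * V (lshift m i) (lshift m i) <=
  (c^-1 * s * \sum_(j < m) lamR j)%:C.
Proof.
move=> s_ge0.
have diagE (i : 'I_k) : (lamL i)%:C * V (lshift m i) (lshift m i) =
    - \sum_j (dR j)%:C * (S j i / (pL i)%:C * V (lshift m i) (rshift k j)).
  have pn0 : (pL i)%:C != 0 by rewrite gt_eqF ?ltcR ?pL_gt0.
  apply: (mulIf pn0); rewrite mulrAC -rmorphM mulrC lcol_eq_rcols mulNr mulr_suml.
  by congr (- _); apply: eq_bigr => j _; field; exact pn0.
rewrite -(ger0_norm head_gap_ge0); under eq_bigr do rewrite diagE.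
rewrite sumrN exchange_big normrN /=; apply: le_trans (ler_norm_sum _ _ _) _.
rewrite rmorphM rmorph_sum /= mulr_sumr; apply: ler_sum => j _.
rewrite -mulr_sumr normrM normr_real_complex mulrC.
apply: ler_pM; [exact: normr_ge0 | by rewrite ler0c | | by rewrite lecR; exact: dR_le].
apply: le_trans (ler_norm_sum _ _ _) _.
have pLC_gt0 (i : 'I_k) : 0 < (pL i)%:C by rewrite ltcR pL_gt0.
under eq_bigr do rewrite !normrM normfV (gtr0_norm (pLC_gt0 _)).
rewrite -[leRHS]mulr1; apply: cauchy_schwarz_le => [i|i||//||].
- by rewrite divr_ge0 // ltW.
- exact: normr_ge0.
- by rewrite ler0c mulr_ge0 // invr_ge0 ltW.
- have S_le i : (`|S j i| / (pL i)%:C) ^+ 2 <= `|S j i| ^+ 2 * c%:C^-1 ^+ 2.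
    have cC_gt0 : 0 < c%:C by rewrite ltcR.
    rewrite exprMn ler_wpM2l ?exprn_ge0 // ler_pXn2r ?nnegrE ?invr_ge0;
      rewrite ?(ltW (pLC_gt0 i)) ?(ltW cC_gt0) //.
    by rewrite lef_pV2 ?posrE // lecR.
  apply: le_trans (ler_sum _ (fun i _ => S_le i)) _.
  rewrite -mulr_suml rmorphM exprMn fmorphV /= mulrC.
  rewrite ler_wpM2l ?exprn_ge0 ?invr_ge0 ?ler0c ?(ltW c_gt0) //.
  by apply: le_trans (S_row j) _; rewrite rmorphXn.
- by rewrite expr1n; apply: orthoproj_lcol_le1.
Qed.

Lemma head_gap_le_sqr lk mu : 0 < lk -> (forall i : 'I_k, lk <= lamL i) ->
  (forall j : 'I_m, lamR j <= mu) ->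
  \sum_(i < k) (lamL i)%:C * V (lshift m i) (lshift m i) <=
  (mu / lk * c ^- 2 * s ^+ 2 * \sum_(j < m) lamR j)%:C.
Proof.
move=> lk_gt0 lk_le lamR_le.
pose T (i : 'I_k) := \sum_(j < m) (lamR j)%:C ^+ 2 * `|S j i| ^+ 2.
have diag_le (i : 'I_k) : (lamL i)%:C * V (lshift m i) (lshift m i) <= T i / (lk * c ^+ 2)%:C.
  pose z : 'cV[R[i]]_(k + m) := col_mx 0 (\col_j ((dR j)%:C * S j i)).
  have d_gt0 : 0 < lamL i * pL i by rewrite mulr_gt0 ?pL_gt0.
  have Vz a : V a (lshift m i) = - (V *m z) a 0 / (lamL i * pL i)%:C.
    rewrite mxE big_split_ord /= big1 ?add0r => [|i' _]; last by rewrite col_mxEu mxE mulr0.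
    under eq_bigr do rewrite col_mxEd mxE.
    by rewrite -(lcol_eq_rcols i a) mulfK // gt_eqF ?ltcR.
  have diagE : V (lshift m i) (lshift m i) = sqnorm (V *m z) / (lamL i * pL i)%:C ^+ 2.
    rewrite orthoproj_diag // /sqnorm mulr_suml; apply: eq_bigr => b _.
    by rewrite Vz mxE normrM normfV normrN (gtr0_norm (_ : 0 < _%:C)) ?ltcR // exprMn exprVn.
  have z_le : sqnorm z <= T i.
    rewrite /sqnorm big_split_ord /= big1 ?add0r => [|i' _]; last first.
      by rewrite col_mxEu mxE normr0 expr0n.
    apply: ler_sum => j _; rewrite col_mxEd mxE normrM exprMn normr_real_complex.
    by rewrite ler_wpM2r ?exprn_ge0 // ler_pXn2r ?nnegrE ?ler0c // lecR.
  have T_ge0 : 0 <= T i.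
    by apply: sumr_ge0 => j _; rewrite mulr_ge0 ?exprn_ge0 // ler0c.
  have pLC_gt0 : 0 < (pL i)%:C by rewrite ltcR pL_gt0.
  have lamLC_gt0 : 0 < (lamL i)%:C by rewrite ltcR.
  apply: le_trans (_ : _ <= (lamL i)%:C * (T i / (lamL i * pL i)%:C ^+ 2)) _.
    have dC_ge0 : 0 <= (lamL i * pL i)%:C by rewrite ler0c ltW.
    rewrite diagE ler_wpM2l ?(ltW lamLC_gt0) // ler_wpM2r ?invr_ge0 ?exprn_ge0 //.
    exact: le_trans (orthoproj_sqnorm_le z V_proj) z_le.
  have -> : (lamL i)%:C * (T i / (lamL i * pL i)%:C ^+ 2) = T i / (lamL i * pL i ^+ 2)%:C.
    rewrite !rmorphM /=; field.
    by apply/andP; split; [exact: lt0r_neq0 pLC_gt0 | exact: lt0r_neq0 lamLC_gt0].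
  rewrite ler_wpM2l // lef_pV2 ?posrE ?ltcR ?mulr_gt0 ?exprn_gt0 ?pL_gt0 // lecR.
  apply: ler_pM; [exact: ltW | exact/exprn_ge0/ltW | exact: lk_le |].
  by rewrite ler_pXn2r ?nnegrE ?(ltW c_gt0) ?(ltW (pL_gt0 i)) ?pL_ge.
apply: le_trans (ler_sum _ (fun i _ => diag_le i)) _.
rewrite -mulr_suml /T exchange_big /=.
have -> : (mu / lk * c ^- 2 * s ^+ 2 * \sum_(j < m) lamR j)%:C =
          (mu * s ^+ 2 * \sum_(j < m) lamR j)%:C / (lk * c ^+ 2)%:C.
  by rewrite -fmorphV -rmorphM /=; congr _%:C; field; rewrite !gt_eqF.
apply: ler_wpM2r; first by rewrite invr_ge0 ler0c mulr_ge0 ?exprn_ge0 ?ltW.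
rewrite mulr_sumr rmorph_sum /=; apply: ler_sum => j _; rewrite -mulr_sumr.
have lamRC_ge0 : 0 <= (lamR j)%:C by rewrite ler0c.
apply: le_trans (ler_wpM2l (exprn_ge0 2 lamRC_ge0) (S_row j)) _.
rewrite -rmorphXn -rmorphM lecR /= [leRHS]mulrAC ler_wpM2r ?sqr_ge0 // expr2.
by apply: ler_wpM2r; [exact: lamR_ge0 | exact: lamR_le].
Qed.

Lemma trace_gap_le B :
  \sum_(i < k) (lamL i)%:C * V (lshift m i) (lshift m i) <= (B * \sum_(j < m) lamR j)%:C ->
  let gap := \sum_(i < k) (lamL i)%:C * V (lshift m i) (lshift m i) +
             \sum_(j < m) (lamR j)%:C * V (rshift k j) (rshift k j) in
  0 <= gap /\ gap <= ((1 + B) * \sum_(j < m) lamR j)%:C.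
Proof.
move=> head_le gap; have tail_ge0 (j : 'I_m) : 0 <= (lamR j)%:C by rewrite ler0c.
split.
  apply: addr_ge0 head_gap_ge0 _; apply: sumr_ge0 => j _.
  exact: mulr_ge0 (tail_ge0 j) (orthoproj_diag_ge0 _ V_proj).
rewrite mulrDl mul1r rmorphD addrC lerD // rmorph_sum /=; apply: ler_sum => j _.
exact: ler_piMr (tail_ge0 j) (orthoproj_diag_le1 _ V_proj).
Qed.

End TraceGapBounds.

Lemma big_nat_tail_ord (V : nmodType) (f : nat -> V) k m :
  \sum_(k.+1 <= i < (k + m).+1) f i = \sum_(j < m) f (k + j).+1.
Proof.
rewrite -{1}[k.+1]add0n big_addn subSS addKn big_mkord.
by apply: eq_bigr => j _; rewrite addnS addnC.
Qed.

Lemma nonincreasing_head_tail (R : realType) (lam : nat -> R) k m :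
  (forall i j : nat, (1 <= i)%N -> (i <= j)%N -> (j <= k + m)%N -> lam j <= lam i) ->
  (forall i : 'I_k, lam k <= lam (lshift m i).+1) /\
  (forall j : 'I_m, lam (rshift k j).+1 <= lam k.+1).
Proof.
move=> lam_mono; split=> [i|j]; apply: lam_mono => //=; first exact: leq_addr.
  by rewrite ltnS leq_addr.
by rewrite -addnS leq_add2l.
Qed.

Lemma ctrmx_hsubmx_mulmx (R : realType) n1 n2 p (U : 'M[R[i]]_(n1 + n2)) (X : 'M_(n1 + n2, p)) :
  ctrmx U *m X = col_mx (ctrmx (lsubmx U) *m X) (ctrmx (rsubmx U) *m X).
Proof. by rewrite -{1}(hsubmxK U) ctrmx_row_mx mul_col_mx. Qed.

Theorem theorem5 (R : realType) (k m l q : nat)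
  (A U : 'M[R[i]]_(k + m)) (lam : nat -> R)
  (Om : 'M[R[i]]_(k + m, l))
  (Q : 'M[R[i]]_(k + m, \sum_(j < q) l)) (Rq : 'M[R[i]]_(\sum_(j < q) l)) :
  hermitian_psd A ->
  ctrmx U *m U = 1%:M ->
  A = U *m rdiag (k + m) lam *m ctrmx U ->
  (forall i j : nat, (1 <= i)%N -> (i <= j)%N -> (j <= k + m)%N -> lam j <= lam i) ->
  (0 < k)%N -> (0 < m)%N ->
  lam k > lam k.+1 -> lam k.+1 > 0 ->
  (1 <= q)%N -> (k <= l)%N -> (l <= k + m)%N ->
  let U1 := lsubmx U in
  let U2 := rsubmx U in
  let Om1 := ctrmx U1 *m Om in
  let Om2 := ctrmx U2 *m Om in
  let Kq := krylov q A Om in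
  \rank Om1 = k ->
  \rank Kq = (q * l)%N ->
  Kq = Q *m Rq -> ctrmx Q *m Q = 1%:M -> upper_trig Rq ->
  let T := ctrmx Q *m A *m Q in
  let s := specnorm (Om2 *m pinv Om1) in
  let c := cheb q.-1 ((2 * lam k - lam k.+1) / lam k.+1) in
  let trL2 := \sum_(k.+1 <= i < (k + m).+1) lam i in
  (0 <= \tr A - \tr T /\
   \tr A - \tr T <= real_complex R ((1 + c^-1 * s) * trL2)) /\
  (0 < s -> s <= lam k / lam k.+1 * c ->
   0 <= \tr A - \tr T /\
   \tr A - \tr T <= real_complex R ((1 + lam k.+1 / lam k * c ^- 2 * s ^+ 2) * trL2)).
Proof.
move=> A_psd U_unitary A_spectral lam_mono k_gt0 _ lam_gap mu_gt0 q_gt0 _ _.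
move=> U1 U2 Om1 Om2 Kq rank_Om1 _ Kq_QR Q_orth _ T s c trL2.
set mu := lam k.+1 in mu_gt0 lam_gap c *; pose P := shifted_chebp mu q.-1.
set Qt := ctrmx U *m Q; set V := 1%:M - Qt *m ctrmx Qt.
have V_proj : orthoproj V :=
  orthoprojC (orthoproj_range (unitary_mul_orthonormal U_unitary Q_orth)).
have V_annihilates :
    V *m (rdiag (k + m) (fun a => lam a * P.[lam a]) *m col_mx 1%:M (Om2 *m pinv Om1)) = 0.
  rewrite -(mulmx_pinv rank_Om1) -mul_col_mx -ctrmx_hsubmx_mulmx (mulmxA (rdiag _ _)).
  rewrite (mulmxA V) /V /Qt (krylov_compl_range_mulmx U_unitary A_spectral Kq_QR) ?mul0mx //.
  by rewrite (leq_trans (size_shifted_chebp _ _)) ?prednK.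
have lam_ge0 := psd_eigen_ge0 U_unitary A_spectral A_psd.
have [lamL_ge lamR_le] := nonincreasing_head_tail lam_mono.
have lamL_gt0 (i : 'I_k) := lt_le_trans (lt_trans mu_gt0 lam_gap) (lamL_ge i).
have cheb_head (i : 'I_k) : 1 <= c <= P.[lam (lshift m i).+1].
  rewrite horner_shifted_chebp.
  by apply: cheb_shift_ge; [rewrite mu_gt0 ltW | exact: lamL_ge].
have c_gt0 : 0 < c by case/andP: (cheb_head (Ordinal k_gt0)) => /(lt_le_trans ltr01).
have pL_ge (i : 'I_k) : c <= P.[lam (lshift m i).+1] by case/andP: (cheb_head i).
have dR_le (j : 'I_m) :
    `|lam (rshift k j).+1 * P.[lam (rshift k j).+1]| <= lam (rshift k j).+1.
  by rewrite horner_shifted_chebp norm_mul_cheb_shift_le ?lam_ge0 ?lamR_le.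
have S_row := specnorm_row (Om2 *m pinv Om1).
rewrite /T (trace_compression_gap U_unitary A_spectral) big_split_ord /trL2 big_nat_tail_ord.
split=> [|_ _]; apply: (trace_gap_le V_proj lamL_gt0 (fun j => lam_ge0 (rshift k j))).
  exact (head_gap_le V_proj V_annihilates lamL_gt0 c_gt0 pL_ge dR_le S_row (specnorm_ge0 _ k_gt0)).
exact (head_gap_le_sqr V_proj V_annihilates lamL_gt0 c_gt0 pL_ge (fun j => lam_ge0 (rshift k j))
  dR_le S_row (lt_trans mu_gt0 lam_gap) lamL_ge lamR_le).
Qed.
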